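(* Assume (A). If $c_1\ge c_1^F$, then $\inf_{t>t_0}\sup_{s\in(0,t)}\Upsilon(s,t)=L_{c_2}(t^F_{c_2})$.
   Context: $v:[0,\infty)\to[0,\infty)$ is continuous, $v(0)=0$, $\lim_{t\to\infty}v(t)/t^\alpha=0$ for some $\alpha<2$, and is the variance function of a centered Gaussian process $A$ on $\mathbb R$ with stationary increments, $A(0)=0$: $\mathrm{Var}(A(t)-A(s))=v(|t-s|)$; $\Gamma(s,t):=\tfrac12(v(|s|)+v(|t|)-v(|t-s|))$. Fix $b>0$, $c_1>c_2>0$, $t_0:=b/(c_1-c_2)$. For $0<s<t$, $\Sigma(s,t):=\begin{pmatrix}v(t)&\Gamma(s,t)\\ \Gamma(s,t)&v(s)\end{pmatrix}$ (assumed nonsingular), $\Lambda_{s,t}(y,z):=\frac12(y,z)\Sigma(t-s,t)^{-1}(y,z)^\top$, $k(s,t):=\frac{\Gamma(s,t)}{v(t)}(b+c_2t)$, $\Upsilon(s,t):=\Lambda_{s,t}(b+c_2t,b+c_2t-c_1s)$ if $k(s,t)>c_1s$ and $\Upsilon(s,t):=(b+c_2t)^2/(2v(t))$ otherwise. $L_c(t):=(b+ct)^2/(2v(t))$; $t^F_{c_2}$ denotes a minimizer of $L_{c_2}$ over $t>0$, and $c_1^F:=\sup_{s\in(0,t^F_{c_2})}k(s,t^F_{c_2})/s$. Assumption (A): $\sqrt v\in C^2([0,\infty))$, strictly increasing and strictly concave. *)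

From Stdlib Require Import Reals Lra.
From Coquelicot Require Import Coquelicot.
Open Scope R_scope.

Definition Gam (v : R -> R) (s t : R) : R :=
  (v (Rabs s) + v (Rabs t) - v (Rabs (t - s))) / 2.

Definition psd_kernel (K : R -> R -> R) : Prop :=
  forall (n : nat) (tt a : nat -> R),
    0 <= sum_f_R0 (fun i => sum_f_R0 (fun j => a i * a j * K (tt i) (tt j)) n) n.

(** v is the variance function of a centered Gaussian process A on R with
    stationary increments and A(0)=0: such a process (necessarily with
    covariance Gam v) exists iff Gam v is a positive semidefinite kernel
    (Kolmogorov extension theorem). *)
Definition variance_function_of_gaussian_SI (v : R -> R) : Prop :=
  psd_kernel (Gam v).

Definition is_derive_nonneg (f : R -> R) (t l : R) : Prop :=
  filterlim (fun h => (f (t + h) - f t) / h)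
    (within (fun h => h <> 0 /\ 0 <= t + h) (locally 0)) (locally l).

Definition continuous_nonneg (f : R -> R) (t : R) : Prop :=
  filterlim f (within (fun x => 0 <= x) (locally t)) (locally (f t)).

Definition C2_nonneg (f : R -> R) : Prop :=
  exists f1 f2 : R -> R,
    (forall t, 0 <= t -> is_derive_nonneg f t (f1 t)) /\
    (forall t, 0 <= t -> is_derive_nonneg f1 t (f2 t)) /\
    (forall t, 0 <= t -> continuous_nonneg f2 t).

Definition strictly_increasing_nonneg (f : R -> R) : Prop :=
  forall x y, 0 <= x -> x < y -> f x < f y.

Definition strictly_concave_nonneg (f : R -> R) : Prop :=
  forall x y l, 0 <= x -> 0 <= y -> x <> y -> 0 < l < 1 ->
    l * f x + (1 - l) * f y < f (l * x + (1 - l) * y).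

Definition assumption_A (v : R -> R) : Prop :=
  C2_nonneg (fun t => sqrt (v t)) /\
  strictly_increasing_nonneg (fun t => sqrt (v t)) /\
  strictly_concave_nonneg (fun t => sqrt (v t)).

(** Sigma(s,t) = [[v t, Gam s t],[Gam s t, v s]]; its determinant. *)
Definition detSigma (v : R -> R) (s t : R) : R :=
  v t * v s - Gam v s t * Gam v s t.

(** Lambda_{s,t}(y,z) = 1/2 (y,z) Sigma(t-s,t)^{-1} (y,z)^T, with the 2x2
    inverse written out: Sigma^{-1} = 1/det [[v(t-s), -G],[-G, v t]],
    G = Gam (t-s) t. *)
Definition Lambda (v : R -> R) (s t y z : R) : R :=
  let G := Gam v (t - s) t in
  (v (t - s) * y * y - 2 * G * y * z + v t * z * z) / (2 * detSigma v (t - s) t).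

Definition kfun (v : R -> R) (b c2 s t : R) : R :=
  Gam v s t / v t * (b + c2 * t).

Definition Upsilon (v : R -> R) (b c1 c2 s t : R) : R :=
  if Rlt_dec (c1 * s) (kfun v b c2 s t)
  then Lambda v s t (b + c2 * t) (b + c2 * t - c1 * s)
  else (b + c2 * t) ^ 2 / (2 * v t).

Definition Lc (v : R -> R) (b c t : R) : R := (b + c * t) ^ 2 / (2 * v t).

Definition c1F (v : R -> R) (b c2 tF : R) : Rbar :=
  Lub_Rbar (fun x => exists s, 0 < s < tF /\ x = kfun v b c2 s tF / s).

Definition supUpsilon (v : R -> R) (b c1 c2 t : R) : Rbar :=
  Lub_Rbar (fun x => exists s, 0 < s < t /\ x = Upsilon v b c1 c2 s t).

From Stdlib Require Import Reals Lra Psatz.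
From Coquelicot Require Import Coquelicot.
Open Scope R_scope.

(* For every t > 0, Upsilon(., t) dominates the marginal value L_{c2}(t): Lambda is a
   positive definite quadratic form whose restriction to its first coordinate gives
   exactly (b + c2 t)^2 / (2 v t) (Schur complement).  Hence each sup is at least
   L_{c2}(t) >= L_{c2}(t^F).  Conversely c1 >= c1^F means k(s, t^F) <= c1 s on
   (0, t^F), so Upsilon(., t^F) is constantly L_{c2}(t^F); it remains to see that
   t^F > t0.  Strict concavity of sqrt v, together with sqrt v (u) = O(u) at 0, yields
   an s < t^F with Gamma(s, t^F) / s > v(t^F) / t^F, whence
   c1 s >= k(s, t^F) > s (b + c2 t^F) / t^F, i.e. t^F > b / (c1 - c2). *)

Lemma at_right_0_between (c : R) : 0 < c -> at_right 0 (fun u => 0 < u < c).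
Proof.
  intros hc. exists (mkposreal c hc). intros u hu u_pos.
  change (Rabs (u - 0) < c) in hu. rewrite Rminus_0_r in hu.
  pose proof (Rle_abs u). lra.
Qed.

Lemma is_derive_nonneg_0_linear_bound (f : R -> R) (l : R) :
  is_derive_nonneg f 0 l -> f 0 = 0 ->
  at_right 0 (fun u => f u <= (Rabs l + 1) * u).
Proof.
  intros hd f0.
  destruct (proj1 (filterlim_locally _ _) hd (mkposreal 1 Rlt_0_1)) as [e He].
  exists e. intros u hu u_pos.
  assert (hq : Rabs ((f (0 + u) - f 0) / u - l) < 1).
  { apply (He u hu). split; lra. }
  rewrite Rplus_0_l, f0, Rminus_0_r in hq.
  apply Rabs_def2 in hq. pose proof (Rle_abs l).
  assert (hfu : f u / u < Rabs l + 1) by lra.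
  apply (Rmult_lt_compat_r u) in hfu; [|lra].
  unfold Rdiv in hfu. rewrite Rmult_assoc, Rinv_l in hfu; lra.
Qed.

Section IncreasingConcaveFromZero.

Variable f : R -> R.
Hypothesis f0 : f 0 = 0.
Hypothesis f_incr : strictly_increasing_nonneg f.
Hypothesis f_conc : strictly_concave_nonneg f.

Lemma increasing_from_zero_pos (t : R) : 0 < t -> 0 < f t.
Proof. intros ht. rewrite <- f0. apply f_incr; lra. Qed.

Lemma concave_from_zero_lt_double_mid (t : R) : 0 < t -> f t < 2 * f (t / 2).
Proof.
  intros ht.
  pose proof (f_conc 0 t (1/2) (Rle_refl 0) (Rlt_le _ _ ht) ltac:(lra) ltac:(lra)) as hc.
  rewrite f0 in hc. replace (1/2 * 0 + (1 - 1/2) * t) with (t / 2) in hc by field.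
  lra.
Qed.

Lemma concave_chord_lt_near_end (t u : R) : 0 < u < t / 2 ->
  2 * u / t * f (t / 2) + (1 - 2 * u / t) * f t < f (t - u).
Proof.
  intros hu.
  assert (hl : 0 < 2 * u / t < 1).
  { split; [apply Rdiv_lt_0_compat; lra|].
    apply Rmult_lt_reg_r with t; [lra|].
    unfold Rdiv; rewrite Rmult_assoc, Rinv_l; lra. }
  pose proof (f_conc (t / 2) t (2 * u / t) ltac:(lra) ltac:(lra) ltac:(lra) hl) as hc.
  replace (2 * u / t * (t / 2) + (1 - 2 * u / t) * t) with (t - u) in hc by (field; lra).
  exact hc.
Qed.

(* Concavity between t/2 and t gives f(t-u)^2 >= f(t)^2 - 4 u f(t) (f(t) - f(t/2)) / t,
   which beats the target 2 u f(t)^2 / t by the margin 2 u f(t) (2 f(t/2) - f(t)) / t > 0;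
   for small u this margin absorbs f(u)^2 <= M^2 u^2. *)
Lemma concave_sq_gap (M t : R) : 0 < t -> at_right 0 (fun u => f u <= M * u) ->
  exists u, 0 < u < t /\ 2 * (t - u) * f t ^ 2 < t * (f (t - u) ^ 2 + f t ^ 2 - f u ^ 2).
Proof.
  intros ht hM.
  set (Ft := f t). set (Fh := f (t / 2)).
  assert (hFt : 0 < Ft) by (apply increasing_from_zero_pos; lra).
  assert (hFh : 0 < Fh) by (apply increasing_from_zero_pos; lra).
  assert (hFt_mid : Ft < 2 * Fh) by (apply concave_from_zero_lt_double_mid; lra).
  set (c := 2 * Ft * (2 * Fh - Ft) / (t * (M * M + 1))).
  assert (hc : 0 < c).
  { apply Rdiv_lt_0_compat; [nra|]. apply Rmult_lt_0_compat; nra. }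
  assert (ht2 : at_right 0 (fun u => 0 < u < t / 2)) by (apply at_right_0_between; lra).
  destruct (Hierarchy.filter_ex _ (filter_and _ _ hM
              (filter_and _ _ ht2 (at_right_0_between c hc)))) as [u [hfu [hut huc]]].
  exists u. split; [lra|].
  assert (hfu0 : 0 < f u) by (apply increasing_from_zero_pos; lra).
  assert (hg := concave_chord_lt_near_end t u hut). fold Ft Fh in hg.
  set (g := 2 * u / t * Fh + (1 - 2 * u / t) * Ft) in hg.
  assert (hgt : g * t = (t - 2 * u) * Ft + 2 * u * Fh) by (unfold g; field; lra).
  assert (hg0 : 0 < g).
  { apply Rmult_lt_reg_r with t; [lra|]. rewrite hgt. nra. }
  assert (hchord : t * Ft ^ 2 - 4 * u * Ft * (Ft - Fh) <= t * g ^ 2).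
  { apply Rmult_le_reg_r with t; [lra|].
    replace (t * g ^ 2 * t) with ((g * t) ^ 2) by ring. rewrite hgt.
    pose proof (pow2_ge_0 (u * (Ft - Fh))). nra. }
  assert (hsmall : t * f u ^ 2 < 2 * u * Ft * (2 * Fh - Ft)).
  { assert (hcu : u * (t * (M * M + 1)) < 2 * Ft * (2 * Fh - Ft)).
    { apply Rlt_le_trans with (c * (t * (M * M + 1))); [apply Rmult_lt_compat_r; nra|].
      unfold c. right. field. nra. }
    assert (f u ^ 2 <= M * M * u * u) by nra.
    nra. }
  assert (t * g ^ 2 < t * f (t - u) ^ 2) by (apply Rmult_lt_compat_l; nra).
  nra.
Qed.

End IncreasingConcaveFromZero.

Lemma Gam_nonneg_args (v : R -> R) (x y : R) : 0 <= x -> 0 <= y ->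
  Gam v x y = (v x + v y - v (Rabs (y - x))) / 2.
Proof. intros hx hy. unfold Gam. rewrite (Rabs_pos_eq x hx), (Rabs_pos_eq y hy). reflexivity. Qed.

Lemma Gam_sym (v : R -> R) (x y : R) : Gam v x y = Gam v y x.
Proof. unfold Gam. rewrite (Rabs_minus_sym y x). field. Qed.

Lemma Gam_diag (v : R -> R) (x : R) : v 0 = 0 -> Gam v x x = v (Rabs x).
Proof. intros hv0. unfold Gam. rewrite Rminus_diag, Rabs_R0, hv0. field. Qed.

Lemma sqrt_increasing_pos (v : R -> R) (t : R) : v 0 = 0 ->
  strictly_increasing_nonneg (fun x => sqrt (v x)) -> 0 < t -> 0 < v t.
Proof.
  intros hv0 hinc ht. pose proof (hinc 0 t (Rle_refl 0) ht) as h. simpl in h.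
  rewrite hv0, sqrt_0 in h. destruct (Rle_or_lt (v t) 0) as [hle|]; [|assumption].
  rewrite (sqrt_neg_0 _ hle) in h. lra.
Qed.

Lemma exists_Gam_div_gt (v : R -> R) (t : R)
  (hv_nonneg : forall x, 0 <= x -> 0 <= v x) (hv0 : v 0 = 0)
  (hA : assumption_A v) (ht : 0 < t) :
  exists s, 0 < s < t /\ v t / t < Gam v s t / s.
Proof.
  destruct hA as [[f1 [_ [hd1 _]]] [hinc hconc]].
  set (f := fun x => sqrt (v x)) in *.
  assert (f0 : f 0 = 0) by (unfold f; rewrite hv0; apply sqrt_0).
  assert (fsq : forall x, 0 <= x -> v x = f x ^ 2).
  { intros x hx. unfold f. rewrite <- Rsqr_pow2, Rsqr_sqrt; auto. }
  destruct (concave_sq_gap f f0 hinc hconc (Rabs (f1 0) + 1) t ht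
              (is_derive_nonneg_0_linear_bound f _ (hd1 0 (Rle_refl 0)) f0))
    as [u [hu hgap]].
  exists (t - u). split; [lra|].
  rewrite Gam_nonneg_args by lra.
  replace (Rabs (t - (t - u))) with u by (rewrite Rabs_pos_eq; lra).
  rewrite !fsq by lra.
  apply Rmult_lt_reg_r with (2 * t * (t - u)); [nra|].
  replace (f t ^ 2 / t * (2 * t * (t - u))) with (2 * (t - u) * f t ^ 2) by (field; lra).
  replace ((f (t - u) ^ 2 + f t ^ 2 - f u ^ 2) / 2 / (t - u) * (2 * t * (t - u)))
    with (t * (f (t - u) ^ 2 + f t ^ 2 - f u ^ 2)) by (field; lra).
  exact hgap.
Qed.

Lemma t0_lt_of_kfun_le (v : R -> R) (b c1 c2 s t : R) :
  0 < s < t -> 0 < v t -> 0 < b + c2 * t -> c2 < c1 ->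
  v t / t < Gam v s t / s -> kfun v b c2 s t <= c1 * s ->
  b / (c1 - c2) < t.
Proof.
  intros hs hvt hy hc hGam hk. unfold kfun in hk.
  assert (hratio : s / t < Gam v s t / v t).
  { apply Rmult_lt_reg_r with (v t / s); [apply Rdiv_lt_0_compat; lra|].
    replace (s / t * (v t / s)) with (v t / t) by (field; lra).
    replace (Gam v s t / v t * (v t / s)) with (Gam v s t / s) by (field; lra).
    exact hGam. }
  assert (hlt : s / t * (b + c2 * t) < c1 * s).
  { apply Rlt_le_trans with (Gam v s t / v t * (b + c2 * t)); [|exact hk].
    apply Rmult_lt_compat_r; assumption. }
  assert (hslope : b + c2 * t < c1 * t).
  { apply Rmult_lt_reg_l with (s / t); [apply Rdiv_lt_0_compat; lra|].
    replace (s / t * (c1 * t)) with (c1 * s) by (field; lra). exact hlt. }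
  apply Rmult_lt_reg_r with (c1 - c2); [lra|].
  replace (b / (c1 - c2) * (c1 - c2)) with b by (field; lra).
  lra.
Qed.

Lemma psd_kernel_det_nonneg (K : R -> R -> R) (x y : R) : psd_kernel K -> 0 < K x x ->
  0 <= K x x * K y y - K x y * K y x.
Proof.
  intros hK hx.
  specialize (hK 1%nat (fun i => match i with O => x | _ => y end)
                (fun i => match i with O => - K x y | _ => K x x end)).
  simpl in hK.
  apply Rmult_le_reg_l with (K x x); [exact hx|]. lra.
Qed.

Lemma detSigma_pos (v : R -> R) (s t : R) :
  v 0 = 0 -> variance_function_of_gaussian_SI v -> 0 <= s -> 0 <= t -> 0 < v t ->
  detSigma v s t <> 0 -> 0 < detSigma v s t.
Proof.
  intros hv0 hgauss hs ht hvt hD.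
  assert (hdiag : forall x, 0 <= x -> Gam v x x = v x).
  { intros x hx. rewrite Gam_diag, Rabs_pos_eq; auto. }
  pose proof (psd_kernel_det_nonneg (Gam v) t s hgauss) as hnn.
  rewrite !hdiag, (Gam_sym v t s) in hnn by assumption.
  unfold detSigma in *. specialize (hnn hvt). lra.
Qed.

Lemma inv_quad_form_ge_marginal (a c g y z : R) : 0 < a -> 0 < a * c - g * g ->
  y ^ 2 / (2 * a) <= (c * y * y - 2 * g * y * z + a * z * z) / (2 * (a * c - g * g)).
Proof.
  intros ha hD.
  assert (E : (c * y * y - 2 * g * y * z + a * z * z) / (2 * (a * c - g * g)) - y ^ 2 / (2 * a)
              = (g * y - a * z) ^ 2 / (2 * a * (a * c - g * g))) by (field; lra).
  assert (0 <= (g * y - a * z) ^ 2 / (2 * a * (a * c - g * g))).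
  { apply Rdiv_le_0_compat; [apply pow2_ge_0 | nra]. }
  lra.
Qed.

Lemma Lc_le_Upsilon (v : R -> R) (b c1 c2 s t : R) :
  v 0 = 0 -> variance_function_of_gaussian_SI v -> 0 < v t -> 0 < s < t ->
  detSigma v (t - s) t <> 0 -> Lc v b c2 t <= Upsilon v b c1 c2 s t.
Proof.
  intros hv0 hgauss hvt hs hD.
  unfold Upsilon, Lc. destruct (Rlt_dec _ _); [|lra].
  pose proof (detSigma_pos v (t - s) t hv0 hgauss ltac:(lra) ltac:(lra) hvt hD) as hDp.
  unfold Lambda. unfold detSigma in hDp |- *.
  apply inv_quad_form_ge_marginal; lra.
Qed.

Lemma Lc_le_supUpsilon (v : R -> R) (b c1 c2 t : R) :
  v 0 = 0 -> variance_function_of_gaussian_SI v -> 0 < v t -> 0 < t ->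
  detSigma v (t - t / 2) t <> 0 ->
  Rbar_le (Lc v b c2 t) (supUpsilon v b c1 c2 t).
Proof.
  intros hv0 hgauss hvt ht hD.
  destruct (Lub_Rbar_correct (fun x => exists s, 0 < s < t /\ x = Upsilon v b c1 c2 s t))
    as [hub _].
  apply Rbar_le_trans with (Upsilon v b c1 c2 (t / 2) t).
  - apply Lc_le_Upsilon; auto; lra.
  - apply hub. exists (t / 2). split; [lra | reflexivity].
Qed.

Lemma supUpsilon_eq_Lc (v : R -> R) (b c1 c2 t : R) : 0 < t ->
  (forall s, 0 < s < t -> kfun v b c2 s t <= c1 * s) ->
  supUpsilon v b c1 c2 t = Lc v b c2 t.
Proof.
  intros ht hk.
  assert (hconst : forall s, 0 < s < t -> Upsilon v b c1 c2 s t = Lc v b c2 t).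
  { intros s hs. unfold Upsilon. destruct (Rlt_dec _ _) as [hlt|]; [|reflexivity].
    pose proof (hk s hs). lra. }
  apply is_lub_Rbar_unique. split.
  - intros x [s [hs ->]]. rewrite hconst by exact hs. apply Rle_refl.
  - intros m hm. apply hm. exists (t / 2). split; [lra|].
    symmetry. apply hconst. lra.
Qed.

Lemma kfun_le_of_c1F_le (v : R -> R) (b c1 c2 tF s : R) :
  Rbar_le (c1F v b c2 tF) (Finite c1) -> 0 < s < tF -> kfun v b c2 s tF <= c1 * s.
Proof.
  intros hc1F hs.
  destruct (Lub_Rbar_correct (fun x => exists s, 0 < s < tF /\ x = kfun v b c2 s tF / s))
    as [hub _].
  assert (hle : kfun v b c2 s tF / s <= c1)
    by exact (Rbar_le_trans _ _ (Finite c1) (hub _ (ex_intro _ s (conj hs eq_refl))) hc1F).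
  apply (Rmult_le_compat_r s) in hle; [|lra].
  replace (kfun v b c2 s tF / s * s) with (kfun v b c2 s tF) in hle by (field; lra).
  lra.
Qed.

Theorem corollary3p7 (v : R -> R) (b c1 c2 tF : R)
  (hv_cont : forall t, 0 <= t -> continuous_nonneg v t)
  (hv_nonneg : forall t, 0 <= t -> 0 <= v t)
  (hv0 : v 0 = 0)
  (hv_growth : exists alpha, alpha < 2 /\
      is_lim (fun t => v t / Rpower t alpha) p_infty 0)
  (hv_gauss : variance_function_of_gaussian_SI v)
  (hb : 0 < b) (hc2 : 0 < c2) (hc12 : c2 < c1)
  (hSigma : forall s t, 0 < s < t -> detSigma v s t <> 0)
  (htF : 0 < tF) (htFmin : forall t, 0 < t -> Lc v b c2 tF <= Lc v b c2 t)
  (hA : assumption_A v)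
  (hc1F : Rbar_le (c1F v b c2 tF) (Finite c1)) :
  Rbar_glb (fun y => exists t, b / (c1 - c2) < t /\ y = supUpsilon v b c1 c2 t)
  = Finite (Lc v b c2 tF).
Proof.
  assert (vpos : forall t, 0 < t -> 0 < v t).
  { intros t. apply sqrt_increasing_pos; [exact hv0 | apply hA]. }
  pose proof (fun s => kfun_le_of_c1F_le v b c1 c2 tF s hc1F) as hk.
  assert (ht0 : 0 < b / (c1 - c2)) by (apply Rdiv_lt_0_compat; lra).
  assert (htF0 : b / (c1 - c2) < tF).
  { destruct (exists_Gam_div_gt v tF hv_nonneg hv0 hA htF) as [s [hs hGam]].
    apply (t0_lt_of_kfun_le v b c1 c2 s tF hs (vpos tF htF)); auto.
    nra. }
  apply Rbar_is_glb_unique. split.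
  - intros x [t [ht ->]].
    apply Rbar_le_trans with (Lc v b c2 t); [apply htFmin; lra|].
    apply Lc_le_supUpsilon; [exact hv0 | exact hv_gauss | apply vpos; lra | lra |].
    apply hSigma; lra.
  - intros m hm. apply hm. exists tF. split; [exact htF0|].
    symmetry. apply supUpsilon_eq_Lc; assumption.
Qed.
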